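(* Let $q$ be an odd prime power, $c\in\mathbb{F}_q^*$, $f(X)=X(X^{q-1}-c)^{q+1}$ on $\mathbb{F}_{q^2}$, with $a,\beta,g$ as in the context. For $L_{[u:v]}\in\mathbb{P}^1$ we have $g(u,v)=0$ if and only if ($c=1$ and $v=0$) or ($c=-1$ and $u=0$). Moreover, for each $L_{[u:v]}\in\mathbb{P}^1$ with $g(u,v)\neq0$, the set $L_{[u:v]}\setminus\{0\}$ is the union of exactly $\frac{q-1}{d}$ cycles of length $d$ in $\mathcal{G}(f)$, where $d$ is the multiplicative order of $g(u,v)$ in $\mathbb{F}_q^*$.
   Context: $a\in\mathbb{F}_q^*$ is a non-square in $\mathbb{F}_q$, $\beta\in\mathbb{F}_{q^2}$ with $\beta^2=a$; every element of $\mathbb{F}_{q^2}$ is uniquely $x+y\beta$, $x,y\in\mathbb{F}_q$. For $(x,y)\neq(0,0)$, $g(x,y)=\frac{(1-c)^2x^2-(1+c)^2y^2a}{x^2-y^2a}\in\mathbb{F}_q$; it satisfies $g(\lambda x,\lambda y)=g(x,y)$ for $\lambda\in\mathbb{F}_q^*$. For $(u,v)\in\mathbb{F}_q^2\setminus\{(0,0)\}$, $L_{[u:v]}=\{\lambda(u+v\beta):\lambda\in\mathbb{F}_q\}$, and $\mathbb{P}^1$ is the set of these $q+1$ lines ($L_{[u:v]}=L_{[u':v']}$ iff $(u',v')$ is a nonzero scalar multiple of $(u,v)$). $\mathcal{G}(f)$ is the functional graph (vertices $\mathbb{F}_{q^2}$, edges $\langle x,f(x)\rangle$); a cycle of length $n$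 consists of distinct $\alpha,f(\alpha),\dots,f^{(n-1)}(\alpha)$ with $f^{(n)}(\alpha)=\alpha$. *)

From HB Require Import structures.
From mathcomp Require Import all_boot all_order all_algebra all_field.
Set Implicit Arguments. Unset Strict Implicit. Unset Printing Implicit Defensive.
Import GRing.Theory.
Local Open Scope ring_scope.

(* F plays F_q, K plays F_{q^2}, iota : F -> K the embedding of F_q in F_{q^2}. *)

Definition fmap (F K : finFieldType) (iota : {rmorphism F -> K}) (q : nat)
  (c : F) (x : K) : K :=
  x * (x ^+ (q.-1) - iota c) ^+ q.+1.

Definition gfun (F : finFieldType) (c a x y : F) : F :=
  ((1 - c) ^+ 2 * x ^+ 2 - (1 + c) ^+ 2 * y ^+ 2 * a) / (x ^+ 2 - y ^+ 2 * a).

Definition line_star (F K : finFieldType) (iota : {rmorphism F -> K}) (beta : K)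
  (u v : F) : {set K} :=
  [set iota l * (iota u + iota v * beta) | l : F] :\ 0.

Definition is_mult_order (F : finFieldType) (x : F) (d : nat) : Prop :=
  [/\ (0 < d)%N, x ^+ d = 1 & forall k : nat, (0 < k < d)%N -> x ^+ k != 1].

Definition is_cycle (T : finType) (f : T -> T) (n : nat) (S : {set T}) : Prop :=
  exists alpha : T, [/\ (0 < n)%N, S = [set iter k f alpha | k : 'I_n],
                        #|S| = n & iter n f alpha = alpha].

(* Write w = u + v beta.  As beta^q = -beta, the map x |-> x^q is the conjugation
   w |-> w' = u - v beta, so w^(q-1) = w'/w and
   (w^(q-1) - c)^(q+1) = (w/w' - c)(w'/w - c) = g(u,v), an element of F_q.
   Hence f(l w) = l g(u,v) w for l in F_q: on L_[u:v] \ {0}, a copy of F_q^*, f is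
   multiplication by g(u,v), so all its orbits are cycles of length d and the
   q - 1 points split into (q - 1)/d of them.  The zeros of g are read off its
   numerator, using that a is not a square and that 2 != 0 because q is odd. *)

From HB Require Import structures.
From mathcomp Require Import all_boot all_order all_algebra all_field.
From mathcomp Require Import ring pgroup.
Import GRing.Theory.
Set Implicit Arguments. Unset Strict Implicit. Unset Printing Implicit Defensive.

Section UniformCycles.
Variables (T : finType) (f : T -> T) (A : {set T}) (d : nat).
Hypotheses (d_gt0 : 0 < d) (f_stable : {in A, forall z, f z \in A})
  (iter_period : {in A, forall z, iter d f z = z})
  (iter_aperiodic : {in A, forall z k, 0 < k < d -> iter k f z != z}).

Definition cycle_of z := [set iter k f z | k : 'I_d].

Lemma iter_stable z k : z \in A -> iter k f z \in A.
Proof. by move=> zA; elim: k => //= k IH; apply: f_stable. Qed.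

Lemma iter_modn z k : z \in A -> iter k f z = iter (k %% d) f z.
Proof.
move=> zA; rewrite {1}(divn_eq k d) iterD.
by elim: (k %/ d) => //= m IH; rewrite mulSn iterD iter_period ?iter_stable.
Qed.

Lemma mem_iter_cycle_of z k : z \in A -> iter k f z \in cycle_of z.
Proof.
by move=> zA; rewrite iter_modn //; apply/imsetP; exists (Ordinal (ltn_pmod k d_gt0)).
Qed.

Lemma cycle_of_id z : z \in A -> z \in cycle_of z.
Proof. exact: (@mem_iter_cycle_of z 0). Qed.

Lemma cycle_of_sub z : z \in A -> cycle_of z \subset A.
Proof. by move=> zA; apply/subsetP=> _ /imsetP[k _ ->]; apply: iter_stable. Qed.

Lemma card_cycle_of z : z \in A -> #|cycle_of z| = d.
Proof.
move=> zA; have iter_neq i j : i < j < d -> iter i f z != iter j f z.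
  case/andP=> lt_ij lt_jd; rewrite eq_sym -(subnK (ltnW lt_ij)) iterD.
  by rewrite iter_aperiodic ?iter_stable // subn_gt0 lt_ij (leq_ltn_trans (leq_subr _ _)).
rewrite card_imset ?card_ord // => i j eq_ij; apply/val_inj/eqP.
by case: ltngtP => // [lt_ij | lt_ji]; [move: (iter_neq i j) | move: (iter_neq j i)];
  rewrite ?lt_ij ?lt_ji ltn_ord eq_ij eqxx => /(_ isT).
Qed.

Lemma cycle_of_eq z x : z \in A -> x \in cycle_of z -> cycle_of x = cycle_of z.
Proof.
move=> zA /imsetP[i _ ->]; apply/eqP.
rewrite eqEcard !card_cycle_of ?iter_stable // leqnn andbT.
by apply/subsetP=> _ /imsetP[k _ ->]; rewrite -iterD mem_iter_cycle_of.
Qed.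

Lemma uniform_cycle_partition :
  exists C : {set {set T}},
    [/\ {in C, forall X : {set T}, is_cycle f d X}, trivIset C, cover C = A
      & #|C| = #|A| %/ d].
Proof.
pose C := [set cycle_of z | z in A].
have card_C : {in C, forall X : {set T}, #|X| = d}.
  by move=> _ /imsetP[z zA ->]; rewrite card_cycle_of.
have part_C : partition C A.
  apply/and3P; split.
  - apply/eqP/setP=> x; apply/bigcupP/idP => [[_ /imsetP[z zA ->]] | xA].
      exact/subsetP/cycle_of_sub.
    by exists (cycle_of x); [apply: imset_f | apply: cycle_of_id].
  - apply/trivIsetP=> _ _ /imsetP[z zA ->] /imsetP[y yA ->].
    apply: contraR => /pred0Pn[x /andP[xz xy]].
    by rewrite -(cycle_of_eq zA xz) -(cycle_of_eq yA xy).
  - by apply/imsetP=> -[z zA /setP/(_ z)]; rewrite inE cycle_of_id.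
case/and3P: (part_C) => /eqP cover_C triv_C _.
exists C; split=> //; last by rewrite (card_uniform_partition card_C part_C) mulnK.
move=> _ /imsetP[z zA ->]; exists z.
by rewrite card_cycle_of ?iter_period.
Qed.

End UniformCycles.

Local Open Scope ring_scope.

Section SubfieldFrobenius.
Variables (F K : finFieldType) (iota : {rmorphism F -> K}).
Local Notation q := #|F|.

Lemma exprD_card (x y : K) : (x + y) ^+ q = x ^+ q + y ^+ q.
Proof.
apply: exprDn_pchar; have [p p_pr pF] := finPcharP F.
rewrite (eq_pnat _ (pcharf_eq (rmorph_pchar iota pF))).
by have := pprimeChar_pgroup pF; rewrite /pgroup cardsT.
Qed.

Lemma rmorph_expf_card (x : F) : iota x ^+ q = iota x.
Proof. by rewrite -rmorphXn expf_card. Qed.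

Lemma expf_card_fixed (x : K) : x ^+ q = x -> exists y, x = iota y.
Proof.
move=> xq; have := congr1 (fun P => (map_poly iota P).[x]) (finField_genPoly F).
rewrite /= rmorphB /= map_polyXn map_polyX rmorph_prod !hornerE horner_prod xq subrr.
move/esym/eqP/prodf_eq0 => [y _].
by rewrite /= map_polyXsubC hornerXsubC subr_eq0 => /eqP ->; exists y.
Qed.

End SubfieldFrobenius.

Lemma two_neq0_odd_card (F : finFieldType) : odd #|F| -> (2 : F) != 0.
Proof.
move=> oddF; apply/eqP=> two0; have pF : 2 \in [pchar F] by rewrite inE two0 eqxx.
have /p_natP[k cardF] : (2%N).-nat #|F| by have := pprimeChar_pgroup pF; rewrite /pgroup cardsT.
move: oddF (finNzRing_gt1 F); rewrite cardF oddX orbF.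
by case: k {cardF}.
Qed.

Section NonSquare.
Variables (F : finFieldType) (a : F).
Hypothesis a_nonsquare : forall b : F, b ^+ 2 != a.

Lemma nonsquare_norm_neq0 (u v : F) : (u, v) != (0, 0) -> u ^+ 2 - v ^+ 2 * a != 0.
Proof.
move=> nz_uv; have [v0 | nz_v] := eqVneq v 0.
  by move: nz_uv; rewrite v0 xpair_eqE eqxx andbT expr0n mul0r subr0 expf_eq0 => ->.
rewrite subr_eq0; apply/eqP => e; have /eqP[] := a_nonsquare (u / v).
by rewrite expr_div_n e mulrAC divff ?mul1r ?expf_neq0.
Qed.

Lemma gfun_eq0 (c u v : F) : (2 : F) != 0 -> (u, v) != (0, 0) ->
  gfun c a u v = 0 <-> (c = 1 /\ v = 0) \/ (c = -1 /\ u = 0).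
Proof.
move=> two_nz nz_uv; split; last by case=> -[-> ->]; rewrite /gfun; ring.
move/eqP; rewrite mulf_eq0 invr_eq0 (negbTE (nonsquare_norm_neq0 nz_uv)) orbF.
rewrite subr_eq0 => /eqP num0.
have [v0 | nz_v] := eqVneq v 0.
  move: nz_uv num0; rewrite v0 xpair_eqE eqxx andbT expr0n /= mulr0 mul0r.
  move=> nz_u /eqP; rewrite mulf_eq0 !expf_eq0 /= (negbTE nz_u) orbF subr_eq0.
  by move=> /eqP c1; left.
have [c1 | nz_c1] := eqVneq (1 + c) 0.
  have c_m1 : c = -1 by apply/eqP; rewrite -addr_eq0 addrC c1.
  move: num0; rewrite c1 c_m1 opprK expr0n !mul0r => /eqP.
  by rewrite mulf_eq0 !expf_eq0 /= (negbTE two_nz) => /eqP; right.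
exfalso; move: (a_nonsquare ((1 - c) * u / ((1 + c) * v))).
by rewrite expr_div_n !exprMn num0 mulrAC divff ?mul1r ?eqxx // mulf_neq0 ?expf_neq0.
Qed.

End NonSquare.

Section QuadraticExtension.
Variables (F K : finFieldType) (iota : {rmorphism F -> K}) (a : F) (beta : K).
Hypotheses (a_nonsquare : forall b : F, b ^+ 2 != a) (beta_sqr : beta ^+ 2 = iota a).
Local Notation q := #|F|.
Local Notation w u v := (iota u + iota v * beta).

Lemma rmorph_neq_beta (y : F) : iota y != beta.
Proof.
apply/eqP => y_beta; have /eqP[] := a_nonsquare y.
by apply: (fmorph_inj iota); rewrite rmorphXn y_beta beta_sqr.
Qed.

Lemma expf_card_beta : beta ^+ q = - beta.
Proof.
have : (beta ^+ q - beta) * (beta ^+ q + beta) == 0.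
  by rewrite -subr_sqr exprAC beta_sqr rmorph_expf_card subrr.
rewrite mulf_eq0 subr_eq0 addr_eq0 => /orP[/eqP/(@expf_card_fixed _ _ iota)[y y_beta] | /eqP //].
by have := rmorph_neq_beta y; rewrite -y_beta eqxx.
Qed.

Lemma expf_card_conj (u v : F) : (w u v) ^+ q = w u (- v).
Proof.
by rewrite (exprD_card iota) exprMn !rmorph_expf_card expf_card_beta rmorphN mulrN mulNr.
Qed.

Lemma mul_conj (u v : F) : w u v * w u (- v) = iota (u ^+ 2 - v ^+ 2 * a).
Proof. by rewrite rmorphB rmorphXn rmorphM rmorphXn -beta_sqr rmorphN; ring. Qed.

Lemma line_gen_neq0 (u v : F) : (u, v) != (0, 0) -> w u v != 0.
Proof.
move=> nz_uv; have := nonsquare_norm_neq0 a_nonsquare nz_uv.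
by rewrite -(fmorph_eq0 iota) -mul_conj mulf_eq0 negb_or => /andP[].
Qed.

Lemma mem_line_star (u v : F) (z : K) : (u, v) != (0, 0) ->
  z \in line_star iota beta u v <-> exists2 l, l != 0 & z = iota l * w u v.
Proof.
move=> nz_uv; rewrite in_setD1; split.
  case/andP=> nz_z /imsetP[l _ z_def]; exists l => //.
  by apply: contraNneq nz_z => l0; rewrite z_def l0 rmorph0 mul0r.
case=> l nz_l ->; rewrite mulf_neq0 ?fmorph_eq0 ?line_gen_neq0 //=.
exact: imset_f.
Qed.

Lemma card_line_star (u v : F) : (u, v) != (0, 0) -> #|line_star iota beta u v| = q.-1.
Proof.
move=> nz_uv; have := cardsD1 0 [set iota l * w u v | l : F].
rewrite /line_star card_imset => [-> |x y /(mulIf (line_gen_neq0 nz_uv))]; last exact: fmorph_inj.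
have -> // : (0 : K) \in [set iota l * w u v | l : F].
by apply/imsetP; exists 0; rewrite ?rmorph0 ?mul0r.
Qed.

Variable c : F.

Lemma line_factor_gfun (u v : F) : (u, v) != (0, 0) ->
  ((w u v) ^+ q.-1 - iota c) ^+ q.+1 = iota (gfun c a u v).
Proof.
move=> nz_uv; have nz_uNv : (u, - v) != (0, 0) by rewrite xpair_eqE oppr_eq0.
have w_nz := line_gen_neq0 nz_uv; have wN_nz := line_gen_neq0 nz_uNv.
have w_pred : (w u v) ^+ q.-1 = w u (- v) / w u v.
  by rewrite -subn1 expfB ?finNzRing_gt1 ?expf_card_conj.
have wN_card : (w u (- v)) ^+ q = w u v by rewrite expf_card_conj opprK.
rewrite w_pred exprSr (exprD_card iota) -rmorphN rmorph_expf_card exprMn exprVn.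
rewrite wN_card expf_card_conj /gfun fmorph_div -mul_conj.
rewrite !(rmorphB, rmorphM, rmorphD, rmorph1, rmorphN) -beta_sqr.
by field; rewrite -rmorphN wN_nz w_nz.
Qed.

Lemma fmap_line (u v l : F) : (u, v) != (0, 0) ->
  fmap iota q c (iota l * w u v) = iota (l * gfun c a u v) * w u v.
Proof.
move=> nz_uv; have [-> | nz_l] := eqVneq l 0; first by rewrite /fmap !(rmorph0, mul0r).
have l_pred : l ^+ q.-1 = 1 by rewrite -subn1 expfB ?finNzRing_gt1 // expf_card divff.
rewrite /fmap exprMn -rmorphXn l_pred rmorph1 mul1r line_factor_gfun // rmorphM.
by rewrite mulrAC.
Qed.

Lemma iter_fmap_line (u v l : F) k : (u, v) != (0, 0) ->
  iter k (fmap iota q c) (iota l * w u v) = iota (l * gfun c a u v ^+ k) * w u v.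
Proof.
move=> nz_uv; elim: k => [|k IH] /=; first by rewrite mulr1.
by rewrite IH fmap_line // exprSr mulrA.
Qed.

End QuadraticExtension.

Theorem mainTheorem5 (F K : finFieldType) (iota : {rmorphism F -> K})
  (q : nat) (c a : F) (beta : K) :
  #|F| = q -> odd q -> #|K| = (q ^ 2)%N ->
  c != 0 ->
  (forall b : F, b ^+ 2 != a) ->
  beta ^+ 2 = iota a ->
  (forall u v : F, (u, v) != (0, 0) ->
     (gfun c a u v = 0 <-> (c = 1 /\ v = 0) \/ (c = -1 /\ u = 0)))
  /\
  (forall u v : F, (u, v) != (0, 0) -> gfun c a u v != 0 ->
     forall d : nat, is_mult_order (gfun c a u v) d ->
     exists C : {set {set K}},
       [/\ (forall S, S \in C -> is_cycle (fmap iota q c) d S),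
           trivIset C,
           cover C = line_star iota beta u v
         & #|C| = ((q - 1) %/ d)%N]).
Proof.
move=> <- odd_q _ _ a_nonsquare beta_sqr; split=> [u v nz_uv | u v nz_uv g_nz d].
  by rewrite gfun_eq0 // two_neq0_odd_card.
case=> d_gt0 g_period g_aperiodic; rewrite subn1 -(card_line_star a_nonsquare beta_sqr nz_uv).
have mem_line z := mem_line_star a_nonsquare beta_sqr z nz_uv.
have iter_line l k := iter_fmap_line a_nonsquare beta_sqr c l k nz_uv.
apply: uniform_cycle_partition d_gt0 _ _ _.
- move=> _ /mem_line[l nz_l ->]; apply/mem_line; exists (l * gfun c a u v).
    by rewrite mulf_neq0.
  exact: (fmap_line a_nonsquare beta_sqr c l nz_uv).
- by move=> _ /mem_line[l _ ->]; rewrite iter_line g_period mulr1.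
move=> _ /mem_line[l nz_l ->] k k_range; rewrite iter_line.
apply: contra (g_aperiodic k k_range) => /eqP /(mulIf (line_gen_neq0 a_nonsquare beta_sqr nz_uv)).
by move/fmorph_inj; rewrite -[RHS]mulr1 => /(mulfI nz_l) ->.
Qed.
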